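(* Let $T$ be a complete countable theory and suppose the formula $\varphi(\bar x;\bar y)$ has the independence property for $T$. Then there are a countable model $M\models T$ and a sequence $\langle \bar b_n : n<\omega\rangle$ of tuples from $M$ with $\ell(\bar b_n)=\ell(\bar y)$ such that: (i) $\varphi$ has the independence property over this sequence, i.e. for all finite disjoint $A,B\subseteq\omega$, $M\models\exists\bar x\,\big(\bigwedge_{n\in A}\varphi(\bar x,\bar b_n)\wedge\bigwedge_{n\in B}\neg\varphi(\bar x,\bar b_n)\big)$; and (ii) for every $\bar a\in{}^{\ell(\bar x)}M$ there is a truth value $\mathbf{t}\in\{0,1\}$ such that for all but finitely many $n$, $M\models\varphi[\bar a,\bar b_n]^{\mathbf t}$.
   Context: For a formula $\psi$, $\psi^1$ denotes $\psi$ and $\psi^0$ denotes $\neg\psi$. *)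

From mathcomp Require Import all_boot.
Set Implicit Arguments. Unset Strict Implicit. Unset Printing Implicit Defensive.

Record signature := Signature {
  fsym : countType;  fari : fsym -> nat;
  rsym : countType;  rari : rsym -> nat }.

Section Syntax.
Variable L : signature.

Inductive fterm (n : nat) : Type :=
| TVar : 'I_n -> fterm n
| TApp (f : fsym L) : ('I_(fari f) -> fterm n) -> fterm n.

Inductive fform : nat -> Type :=
| FEq  n : fterm n -> fterm n -> fform n
| FRel n (r : rsym L) : ('I_(rari r) -> fterm n) -> fform n
| FBot n : fform n
| FNot n : fform n -> fform n
| FAnd n : fform n -> fform n -> fform n
| FOr  n : fform n -> fform n -> fform n
| FImp n : fform n -> fform n -> fform n
| FAll n : fform n.+1 -> fform n
| FEx  n : fform n.+1 -> fform n.

Definition sentence := fform 0.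
Definition theory := sentence -> Prop.
End Syntax.

Record structure (L : signature) := Structure {
  carrier :> Type;
  witness : carrier;
  fint : forall f : fsym L, ('I_(fari f) -> carrier) -> carrier;
  rint : forall r : rsym L, ('I_(rari r) -> carrier) -> Prop }.

Section Semantics.
Variables (L : signature) (M : structure L).

Fixpoint teval n (t : fterm L n) (e : 'I_n -> M) : M :=
  match t with
  | TVar i => e i
  | TApp f ts => @fint L M f (fun j => teval (ts j) e)
  end.

Definition scons n (x : M) (e : 'I_n -> M) : 'I_n.+1 -> M :=
  fun i => match unlift ord0 i with None => x | Some j => e j end.

Fixpoint sat n (phi : fform L n) : ('I_n -> M) -> Prop :=
  match phi in fform _ n return ('I_n -> M) -> Prop with
  | FEq _ t u => fun e => teval t e = teval u e
  | FRel _ r ts => fun e => @rint L M r (fun j => teval (ts j) e)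
  | FBot _ => fun _ => False
  | FNot _ p => fun e => ~ sat p e
  | FAnd _ p q => fun e => sat p e /\ sat q e
  | FOr _ p q => fun e => sat p e \/ sat q e
  | FImp _ p q => fun e => sat p e -> sat q e
  | FAll _ p => fun e => forall x : M, sat p (scons x e)
  | FEx _ p => fun e => exists x : M, sat p (scons x e)
  end.

(* truth of a sentence ('I_0 is empty, so all assignments agree) *)
Definition sat_sentence (s : sentence L) : Prop := forall e : 'I_0 -> M, sat s e.

Definition is_model (T : theory L) : Prop := forall s, T s -> sat_sentence s.

Definition countable_structure : Prop := exists f : M -> nat, injective f.

(* the assignment (a, b) for a formula phi(x;y) with l(x) = k, l(y) = m:
   variables 0..k-1 are x, variables k..k+m-1 are y *)
Definition pair_env k m (a : 'I_k -> M) (b : 'I_m -> M) : 'I_(k + m) -> M :=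
  fun i => match split i with inl j => a j | inr j => b j end.

Definition sat_xy k m (phi : fform L (k + m)) (a : 'I_k -> M) (b : 'I_m -> M) :=
  sat phi (pair_env a b).
End Semantics.

(* T is complete: it has a model, and decides every sentence
   (semantically: every sentence or its negation holds in all models of T) *)
Definition complete_theory (L : signature) (T : theory L) : Prop :=
  (exists M : structure L, is_model M T) /\
  forall s : sentence L,
    (forall M : structure L, is_model M T -> sat_sentence M s) \/
    (forall M : structure L, is_model M T -> sat_sentence M (FNot s)).

Definition has_IP (L : signature) (T : theory L) k m (phi : fform L (k + m)) : Prop :=
  forall n : nat, exists (M : structure L), is_model M T /\
    exists b : 'I_n -> 'I_m -> M,
      forall S : {set 'I_n}, exists a : 'I_k -> M,
        forall i : 'I_n, sat_xy phi a (b i) <-> i \in S.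

(* For each n, has_IP gives a model of T with n parameters shattered by phi.
   Their ultraproduct over a nonprincipal ultrafilter on nat contains, by Los's
   theorem, an infinite sequence shattered by phi; a Skolem hull of this sequence
   and of the shattering witnesses is a countable elementary submodel in which it
   is still shattered.  As there are only countably many tuples a there, a
   diagonal argument along the ultrafilter yields a subsequence along which
   phi(a, b_n) is eventually constant for every a, and a subsequence of a
   shattered sequence is shattered. *)

From Pilot Require Import Defs.
From HB Require Import structures.
From mathcomp Require Import all_boot.
From mathcomp Require Import boolp classical_sets filter.
From Stdlib Require Import ClassicalEpsilon.
Set Implicit Arguments. Unset Strict Implicit. Unset Printing Implicit Defensive.

Lemma filter_iff (T : Type) (F : set_system T) {FF : Filter F} (A B : set T) :
  F (fun x => A x <-> B x) -> F A <-> F B.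
Proof. by move=> AB; split; apply: filterS2 _ AB => x []. Qed.

Lemma ultra_not (T : Type) (F : set_system T) {FU : UltraFilter F} (A : set T) :
  ~ F A <-> F (fun x => ~ A x).
Proof.
split=> [nA|nA A_F]; first by case: (in_ultra_setVsetC A FU).
by apply: (@filter_const _ F _ False); apply: filterS2 _ A_F nA.
Qed.

Lemma cofinite_ultrafilter :
  exists U : set_system nat, UltraFilter U /\ forall N, U (fun n => N <= n).
Proof.
have [U [U_ultra sub]] := ultraFilterLemma eventually_filter.
by exists U; split=> // N; apply: sub; exists N.
Qed.

Definition omap2 (A B C : Type) (f : A -> B -> C) oa ob :=
  if oa is Some a then omap (f a) ob else None.

Fixpoint sequence_opt (A : Type) (s : seq (option A)) : option (seq A) :=
  if s is o :: s' then
    if o is Some a then omap (cons a) (sequence_opt s') else None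
  else Some [::].

Lemma sequence_opt_map (A B : Type) (g : A -> B) (s : seq A) :
  sequence_opt [seq Some (g x) | x <- s] = Some (map g s).
Proof. by elim: s => //= x s ->. Qed.

Definition fun_of_seq (A : Type) k (s : seq A) : option ('I_k -> A) :=
  omap (@tnth k A) (insub s).

Lemma fun_of_seq_enum (A : Type) k (g : 'I_k -> A) :
  fun_of_seq k [seq g i | i <- enum 'I_k] = Some g.
Proof.
have -> : [seq g i | i <- enum 'I_k] = val [tuple g i | i < k] by rewrite /= -val_ord_tuple.
by rewrite /fun_of_seq valK /=; congr Some; apply: funext => i; rewrite tnth_mktuple.
Qed.

Section FormulaCoding.
Variable L : signature.
Local Notation Leaf := GenTree.Leaf.
Local Notation Node := GenTree.Node.
Local Notation rel_atom n := {r : rsym L & {ffun 'I_(rari r) -> fterm L n}}.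

Fixpoint tree_of_term n (t : fterm L n) : GenTree.tree nat :=
  match t with
  | TVar i => Leaf (val i)
  | TApp f ts => Node (pickle f) [seq tree_of_term (ts i) | i <- enum 'I_(fari f)]
  end.

Fixpoint term_of_tree n (t : GenTree.tree nat) : option (fterm L n) :=
  match t with
  | Leaf i => omap (@TVar L n) (insub i)
  | Node c ts =>
      if unpickle c is Some f then
        obind (fun l => omap (@TApp L n f) (fun_of_seq (fari f) l))
              (sequence_opt (map (term_of_tree n) ts))
      else None
  end.

Lemma tree_of_termK n : pcancel (@tree_of_term n) (term_of_tree n).
Proof.
elim=> [i|f ts IH] /=; first by rewrite valK.
rewrite pickleK -map_comp (eq_map (g := Some \o ts)) => [|i]; last exact: IH.
by rewrite sequence_opt_map /= fun_of_seq_enum.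
Qed.

HB.instance Definition _ n := Countable.copy (fterm L n) (pcan_type (@tree_of_termK n)).

Fixpoint tree_of_form n (p : fform L n) : GenTree.tree nat :=
  match p with
  | FEq _ t u => Node 0 [:: Leaf (pickle (t, u))]
  | FRel n r ts => Node 1 [:: Leaf (pickle (Tagged _ [ffun i => ts i] : rel_atom n))]
  | FBot _ => Node 2 [::]
  | FNot _ q => Node 3 [:: tree_of_form q]
  | FAnd _ q r => Node 4 [:: tree_of_form q; tree_of_form r]
  | FOr _ q r => Node 5 [:: tree_of_form q; tree_of_form r]
  | FImp _ q r => Node 6 [:: tree_of_form q; tree_of_form r]
  | FAll _ q => Node 7 [:: tree_of_form q]
  | FEx _ q => Node 8 [:: tree_of_form q]
  end.

Fixpoint form_of_tree n (t : GenTree.tree nat) : option (fform L n) :=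
  match t with
  | Node 0 [:: Leaf c] => omap (fun tu => FEq tu.1 tu.2) (unpickle c)
  | Node 1 [:: Leaf c] =>
      omap (fun rts : rel_atom n => FRel (tagged rts)) (unpickle c)
  | Node 2 [::] => Some (FBot L n)
  | Node 3 [:: a] => omap (@FNot L n) (form_of_tree n a)
  | Node 4 [:: a; b] => omap2 (@FAnd L n) (form_of_tree n a) (form_of_tree n b)
  | Node 5 [:: a; b] => omap2 (@FOr L n) (form_of_tree n a) (form_of_tree n b)
  | Node 6 [:: a; b] => omap2 (@FImp L n) (form_of_tree n a) (form_of_tree n b)
  | Node 7 [:: a] => omap (@FAll L n) (form_of_tree n.+1 a)
  | Node 8 [:: a] => omap (@FEx L n) (form_of_tree n.+1 a)
  | _ => None
  end.

Lemma tree_of_formK n : pcancel (@tree_of_form n) (form_of_tree n).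
Proof.
elim=> {n} [n t u|n r ts|n|n p IH|n p IHp q IHq|n p IHp q IHq|n p IHp q IHq|n p IH|n p IH] /=;
  rewrite ?pickleK ?IH ?IHp ?IHq //=.
by congr (Some (FRel _)); apply: funext => i; rewrite ffunE.
Qed.

HB.instance Definition _ n := Countable.copy (fform L n) (pcan_type (@tree_of_formK n)).
End FormulaCoding.

Section Transport.
Variable L : signature.

Lemma comp_scons (M N : structure L) (h : M -> N) n (x : M) (e : 'I_n -> M) :
  h \o scons x e = scons (h x) (h \o e).
Proof. by apply: funext => v; rewrite /scons /=; case: unlift. Qed.

Lemma comp_pair_env (M N : structure L) (h : M -> N) k m (a : 'I_k -> M) (b : 'I_m -> M) :
  h \o pair_env a b = pair_env (h \o a) (h \o b).
Proof. by apply: funext => v; rewrite /pair_env /=; case: split. Qed.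

Definition elementary (M N : structure L) (h : M -> N) :=
  forall n (p : fform L n) (e : 'I_n -> M), sat p e <-> sat p (h \o e).

Lemma elementary_model (M N : structure L) (h : M -> N) (T : theory L) :
  elementary h -> is_model N T -> is_model M T.
Proof. by move=> hE NT s /NT Ns e; apply/hE. Qed.

Lemma elementary_sat_xy (M N : structure L) (h : M -> N) : elementary h ->
  forall k m (phi : fform L (k + m)) a b, sat_xy phi a b <-> sat_xy phi (h \o a) (h \o b).
Proof. by move=> hE k m phi a b; rewrite /sat_xy -comp_pair_env; apply: hE. Qed.
End Transport.

Section TarskiVaught.
Variables (L : signature) (M : structure L) (S : M -> Prop).
Hypothesis S_witness : S (witness M).
Hypothesis S_TV : forall n (p : fform L n.+1) (e : 'I_n -> M),
  (forall i, S (e i)) -> (exists x, sat p (scons x e)) -> exists2 x, S x & sat p (scons x e).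

Definition graph_form (f : Defs.fsym L) : fform L (fari f).+1 :=
  FEq (TVar L ord0) (TApp (f:=f) (fun k => TVar L (lift ord0 k))).

Lemma sat_graph_form f x (e : 'I_(fari f) -> M) :
  sat (graph_form f) (scons x e) <-> x = fint e.
Proof.
rewrite /= {1}/scons unlift_none.
by have -> : (fun k => scons x e (lift ord0 k)) = e by apply: funext => k; rewrite /scons liftK.
Qed.

Lemma fint_closed f (e : 'I_(fari f) -> M) : (forall i, S (e i)) -> S (fint e).
Proof.
move=> Se; have [|x Sx /sat_graph_form <- //] := S_TV (p := graph_form f) Se.
by exists (fint e); apply/sat_graph_form.
Qed.

Definition substructure : structure L :=
  @Structure L {x : M | S x} (exist S (witness M) S_witness)
    (fun f args => exist S (fint (sval \o args)) (fint_closed (fun k => svalP (args k))))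
    (fun r args => rint (fun k => sval (args k))).

Lemma teval_substructure n (t : fterm L n) (e : 'I_n -> substructure) :
  sval (teval t e) = teval t (sval \o e).
Proof. by elim: t => //= f ts IH; congr fint; apply: funext => k; apply: IH. Qed.

Lemma tarski_vaught : elementary (sval : substructure -> M).
Proof.
move=> n p; elim: p => {n} [n t u|n r ts|n|n p IH|n p IHp q IHq|n p IHp q IHq|n p IHp q IHq
  |n p IH|n p IH] e /=.
- rewrite -!teval_substructure; split=> [-> //|tu].
  by apply: eq_sig_hprop tu => x; apply: Prop_irrelevance.
- by rewrite (funext (fun k => teval_substructure (ts k) e)).
- by [].
- by rewrite IH.
- by rewrite IHp IHq.
- by rewrite IHp IHq.
- by rewrite IHp IHq.
- split=> [allp y|allp x]; last by rewrite IH comp_scons.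
  apply: contrapT => Np.
  have [|x Sx Nx] := S_TV (p := FNot p) (fun i => svalP (e i)); first by exists y.
  by apply: Nx; have := allp (exist S x Sx); rewrite IH comp_scons.
- split=> [[x]|]; first by rewrite IH comp_scons; exists (sval x).
  move=> /(S_TV (fun i => svalP (e i))) [x Sx px].
  by exists (exist S x Sx); rewrite IH comp_scons.
Qed.
End TarskiVaught.

Section SkolemHull.
Variables (L : signature) (M : structure L) (X : countType) (base : X -> M).
Local Notation Leaf := GenTree.Leaf.
Local Notation Node := GenTree.Node.

Definition skolem n (p : fform L n.+1) (e : 'I_n -> M) : M :=
  epsilon (inhabits (witness M)) (fun x => sat p (scons x e)).

(* [Node n (Leaf c :: ts)] denotes the Skolem witness of the formula in n+1
   variables coded by [c] at the values of [ts]; [Leaf c] denotes the base point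
   coded by [c]; ill-formed trees denote [witness M]. *)
Fixpoint skolem_eval (t : GenTree.tree nat) : M :=
  match t with
  | Leaf c => oapp base (witness M) (unpickle c)
  | Node n (Leaf c :: ts) =>
      let e (i : 'I_n) := nth (witness M) (map skolem_eval ts) i in
      oapp (fun p : fform L n.+1 => skolem p e) (witness M) (unpickle c)
  | _ => witness M
  end.

Definition in_hull (x : M) := exists t, skolem_eval t = x.

Lemma witness_in_hull : in_hull (witness M).
Proof. by exists (Node 0 [::]). Qed.

Lemma base_in_hull x : in_hull (base x).
Proof. by exists (Leaf (pickle x)); rewrite /= pickleK. Qed.

Lemma skolem_in_hull n (p : fform L n.+1) e : (forall i, in_hull (e i)) -> in_hull (skolem p e).
Proof.
move=> e_hull; pose t i := sval (cid (e_hull i)).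
exists (Node n (Leaf (pickle p) :: [seq t i | i <- enum 'I_n])).
rewrite /= pickleK /=; congr skolem; apply: funext => i.
by rewrite -map_comp (nth_map i) ?size_enum_ord // nth_ord_enum /= (svalP (cid (e_hull i))).
Qed.

Lemma hull_tarski_vaught n (p : fform L n.+1) (e : 'I_n -> M) :
  (forall i, in_hull (e i)) -> (exists x, sat p (scons x e)) ->
  exists2 x, in_hull x & sat p (scons x e).
Proof.
move=> e_hull ex; exists (skolem p e); first exact: skolem_in_hull.
exact: epsilon_spec ex.
Qed.

Definition skolem_hull := substructure witness_in_hull hull_tarski_vaught.

Lemma skolem_hull_countable : countable_structure skolem_hull.
Proof.
pose tree (x : skolem_hull) := sval (cid (svalP x)).
have treeK x : skolem_eval (tree x) = sval x := svalP (cid (svalP x)).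
exists (fun x => pickle (tree x)) => x y /(pcan_inj pickleK) txy.
apply: eq_sig_hprop => [z|]; first exact: Prop_irrelevance.
by rewrite -[sval x]treeK -[sval y]treeK txy.
Qed.

Lemma downward_lowenheim_skolem : exists (N : structure L) (h : N -> M) (b : X -> N),
  [/\ countable_structure N, elementary h & forall x, h (b x) = base x].
Proof.
exists skolem_hull, sval, (fun x => exist _ (base x) (base_in_hull x)).
by split=> //; [exact: skolem_hull_countable|exact: tarski_vaught].
Qed.
End SkolemHull.

Section Ultraproduct.
Variables (L : signature) (I : Type) (M : I -> structure L) (U : set_system I).
Context {U_ultra : UltraFilter U}.

Definition ueq (f g : forall i, M i) := U (fun i => f i = g i).

Lemma ueq_refl f : ueq f f.
Proof. exact: nearW. Qed.

Lemma ueq_sym f g : ueq f g -> ueq g f.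
Proof. exact: filterS. Qed.

Lemma ueq_trans f g h : ueq f g -> ueq g h -> ueq f h.
Proof. by apply: filterS2 _ => i ->. Qed.

Definition canon (f : forall i, M i) := epsilon (inhabits f) (ueq f).

Lemma canon_ueq f : ueq f (canon f).
Proof. by apply: epsilon_spec; exists f; apply: ueq_refl. Qed.

Lemma canon_eq f g : ueq f g -> canon f = canon g.
Proof.
move=> fg; rewrite /canon (Prop_irrelevance (inhabits f) (inhabits g)).
congr epsilon; apply: funext => h; apply: propext.
by split; [apply: ueq_trans (ueq_sym fg)|apply: ueq_trans fg].
Qed.

(* The quotient by U-almost-everywhere equality, each class being represented by
   the element chosen by [canon]. *)
Definition ultra_carrier := {f : forall i, M i | canon f = f}.

Definition ucls f : ultra_carrier :=
  exist _ (canon f) (canon_eq (ueq_sym (canon_ueq f))).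

Lemma ucls_ueq f : ueq (sval (ucls f)) f.
Proof. exact/ueq_sym/canon_ueq. Qed.

Lemma ultra_carrier_eq (x y : ultra_carrier) : ueq (sval x) (sval y) -> x = y.
Proof.
move=> xy; apply: eq_sig_hprop => [f|]; first exact: Prop_irrelevance.
by rewrite -(svalP x) -(svalP y); apply: canon_eq.
Qed.

Definition ultraproduct : structure L :=
  @Structure L ultra_carrier (ucls (fun i => witness (M i)))
    (fun f args => ucls (fun i => fint (fun k => sval (args k) i)))
    (fun r args => U (fun i => rint (fun k => sval (args k) i))).

Definition coord n (e : 'I_n -> ultraproduct) i : 'I_n -> M i := fun v => sval (e v) i.

Lemma teval_coord n (t : fterm L n) (e : 'I_n -> ultraproduct) :
  U (fun i => sval (teval t e) i = teval t (coord e i)).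
Proof.
elim: t => [v|f ts IH] /=; first exact: ueq_refl.
have F_ueq := ucls_ueq (fun i => fint (fun k => sval (teval (ts k) e) i)).
apply: filterS2 _ F_ueq (filter_forall _ IH) => i /= -> tsi.
by congr fint; apply: funext.
Qed.

Lemma coord_scons n (x : ultraproduct) (e : 'I_n -> ultraproduct) i :
  coord (scons x e) i = scons (sval x i) (coord e i).
Proof. exact: (comp_scons (fun y : ultraproduct => sval y i)). Qed.

Lemma ultra_choice (Q : forall i, M i -> Prop) :
  U (fun i => exists x, Q i x) -> exists x : ultraproduct, U (fun i => Q i (sval x i)).
Proof.
pose F i := epsilon (inhabits (witness (M i))) (Q i).
move=> exQ; exists (ucls F); apply: filterS2 _ exQ (ucls_ueq F) => i exQi ->.
exact: epsilon_spec.
Qed.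

Lemma los n (p : fform L n) (e : 'I_n -> ultraproduct) :
  sat p e <-> U (fun i => sat p (coord e i)).
Proof.
elim: p e => {n} [n t u|n r ts|n|n p IH|n p IHp q IHq|n p IHp q IHq|n p IHp q IHq
  |n p IH|n p IH] e /=.
- split=> [tu|tu].
    by apply: filterS2 _ (teval_coord t e) (teval_coord u e) => i <- <-; rewrite tu.
  by apply: ultra_carrier_eq; apply: filterS3 _ tu (teval_coord t e) (teval_coord u e) => i ? -> ->.
- apply: filter_iff; apply: filterS (filter_forall _ (fun k => teval_coord (ts k) e)) => i tsi.
  by rewrite (funext tsi).
- by split=> //; apply: filter_const.
- by rewrite IH ultra_not.
- rewrite IHp IHq; split=> [[p_U q_U]|pq]; first by apply: filterS2 _ p_U q_U.
  by split; apply: filterS pq => i [].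
- rewrite IHp IHq; split=> [[p_U|q_U]|pq].
  + by apply: filterS p_U => i; left.
  + by apply: filterS q_U => i; right.
  + have [p_U|np] := in_ultra_setVsetC (fun i => sat p (coord e i)) U_ultra; first by left.
    by right; apply: filterS2 _ pq np => i [].
- rewrite IHp IHq; split=> [pq|pq p_U]; last by apply: filterS2 _ pq p_U => i; apply.
  have [/pq|np] := in_ultra_setVsetC (fun i => sat p (coord e i)) U_ultra.
    by apply: filterS => i qi _.
  by apply: filterS np => i np /np.
- split=> [allp|allp x]; last first.
    by rewrite IH; apply: filterS allp => i /(_ (sval x i)); rewrite coord_scons.
  apply: contrapT => /(ultra_not (F := U) _).1 nallp.
  have [x nx] := @ultra_choice (fun i y => ~ sat p (scons y (coord e i)))
    (filterS (fun i => (existsNP _).2) nallp).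
  have := allp x; rewrite IH => px; apply: (@filter_const _ U _ False).
  by apply: filterS2 _ px nx => i; rewrite coord_scons.
- split=> [[x]|exp].
    by rewrite IH; apply: filterS => i; rewrite coord_scons; exists (sval x i).
  have [x px] := ultra_choice exp; exists x; rewrite IH.
  by apply: filterS px => i; rewrite coord_scons.
Qed.

Definition ucls_env n (E : forall i, 'I_n -> M i) : 'I_n -> ultraproduct :=
  fun v => ucls (fun i => E i v).

Lemma los_sat_xy k m (phi : fform L (k + m)) (a : forall i, 'I_k -> M i) b :
  sat_xy phi (ucls_env a) (ucls_env b) <-> U (fun i => sat_xy phi (a i) (b i)).
Proof.
rewrite /sat_xy.
have -> : pair_env (ucls_env a) (ucls_env b) = ucls_env (fun i => pair_env (a i) (b i)).
  by apply: funext => w; rewrite /ucls_env /pair_env; case: (split w).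
rewrite los; apply: filter_iff.
apply: filterS (filter_forall _ (fun w => ucls_ueq (fun i => pair_env (a i) (b i) w))) => i abi.
by rewrite /coord (funext abi).
Qed.

Lemma ultraproduct_model (T : theory L) :
  (forall i, is_model (M i) T) -> is_model ultraproduct T.
Proof. by move=> MT s Ts e; apply/los; apply: nearW => i; apply: MT. Qed.
End Ultraproduct.
Arguments ultraproduct {L I} M U {U_ultra}.

Section Shattering.
Variables (L : signature) (T : theory L) (k m : nat) (phi : fform L (k + m)).

Record shattered_model n := ShatteredModel {
  sm_struct :> structure L;
  sm_model : is_model sm_struct T;
  sm_param : 'I_n -> 'I_m -> sm_struct;
  sm_witness : {set 'I_n} -> 'I_k -> sm_struct;
  sm_shatter : forall S i, sat_xy phi (sm_witness S) (sm_param i) <-> i \in S }.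

Lemma has_IP_shattered_model : has_IP T phi -> forall n, shattered_model n.
Proof.
move=> hIP n; case: (cid (hIP n)) => M [MT /cid [b shatter]].
exact: (ShatteredModel MT (fun S => svalP (cid (shatter S)))).
Qed.

Section UltraShattering.
Variables (SM : forall n, shattered_model n) (U : set_system nat).
Context {U_ultra : UltraFilter U}.
Hypothesis U_cofinite : forall N, U (fun n => N <= n).

Let M j := sm_struct (SM j).

(* The j-th factor only has the parameters b_0, ..., b_(j-1); the junk value for
   n >= j is irrelevant since U contains all cofinite sets. *)
Definition factor_param j n : 'I_m -> M j :=
  if insub n is Some o then sm_param (SM j) o else fun=> witness (M j).

Definition factor_witness j (A : seq nat) : 'I_k -> M j :=
  sm_witness (SM j) [set o | val o \in A].

Definition ult_param n : 'I_m -> ultraproduct M U :=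
  ucls_env (fun j => factor_param j n).

Definition ult_witness A : 'I_k -> ultraproduct M U :=
  ucls_env (fun j => factor_witness j A).

Lemma ult_shatter A n : sat_xy phi (ult_witness A) (ult_param n) <-> n \in A.
Proof.
have agree : U (fun j => sat_xy phi (factor_witness j A) (factor_param j n) <-> n \in A).
  by apply: filterS (U_cofinite n.+1) => j ltnj; rewrite /factor_param insubT sm_shatter inE.
rewrite los_sat_xy (filter_iff agree); split; first exact: filter_const.
by move=> nA; apply: nearW.
Qed.
End UltraShattering.

Lemma IP_shattered_sequence : has_IP T phi ->
  exists (M : structure L) (b : nat -> 'I_m -> M) (a : seq nat -> 'I_k -> M),
    is_model M T /\ forall A n, sat_xy phi (a A) (b n) <-> n \in A.
Proof.
move=> /has_IP_shattered_model SM; have [U [U_ultra U_cofinite]] := cofinite_ultrafilter.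
exists _, (ult_param SM (U := U)), (ult_witness SM (U := U)).
split; first by apply: ultraproduct_model => j; apply: sm_model.
exact: ult_shatter.
Qed.

Lemma IP_countable_shattered_sequence : has_IP T phi ->
  exists (N : structure L) (b : nat -> 'I_m -> N) (a : seq nat -> 'I_k -> N),
    [/\ countable_structure N, is_model N T & forall A n, sat_xy phi (a A) (b n) <-> n \in A].
Proof.
move=> /IP_shattered_sequence [M [b [a [MT shatter]]]].
pose base (x : (nat * 'I_m) + (seq nat * 'I_k)) :=
  match x with inl (n, i) => b n i | inr (A, i) => a A i end.
have [N [h [c [N_countable h_elem h_base]]]] := downward_lowenheim_skolem base.
exists N, (fun n i => c (inl (n, i))), (fun A i => c (inr (A, i))).
split=> // [|A n]; first exact: elementary_model h_elem MT.
rewrite (elementary_sat_xy h_elem) -shatter.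
have -> : h \o (fun i => c (inl (n, i))) = b n := funext (fun i => h_base (inl (n, i))).
by have -> : h \o (fun i => c (inr (A, i))) = a A := funext (fun i => h_base (inr (A, i))).
Qed.
End Shattering.

Section Diagonal.
Variables (U : set_system nat) (P : nat -> nat -> Prop).
Context {U_ultra : UltraFilter U}.
Hypothesis U_cofinite : forall N, U (fun n => N <= n).

Definition limit_agree n i := forall j, j <= n -> (P j i <-> U (P j)).

Lemma limit_agree_ultra n : U (limit_agree n).
Proof.
have agree_j j : U (fun i => P j i <-> U (P j)).
  have [Pj|nPj] := in_ultra_setVsetC (P j) U_ultra.
    by apply: filterS (Pj) => i Pji; split.
  have nUPj := (ultra_not (P j)).2 nPj.
  by apply: filterS nPj => i nPji; split=> [/nPji|/nUPj].
apply: filterS (filter_forall _ (fun j : 'I_n.+1 => agree_j j)) => i agree j lejn.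
exact: (agree (Ordinal (lejn : j < n.+1))).
Qed.

Lemma limit_agree_above n N : exists i, N <= i /\ limit_agree n i.
Proof.
apply: (@filter_ex _ U).
by apply: filterS2 _ _ (U_cofinite N) (limit_agree_ultra n) => i.
Qed.

Definition next_agree N n := epsilon (inhabits 0) (fun i => N <= i /\ limit_agree n i).

Lemma next_agree_spec N n : N <= next_agree N n /\ limit_agree n (next_agree N n).
Proof. exact: epsilon_spec (limit_agree_above n N). Qed.

Fixpoint diagonal n := if n is n'.+1 then next_agree (diagonal n').+1 n else next_agree 0 0.

Lemma ultra_limit_subsequence : exists s : nat -> nat,
  {homo s : i j / i < j} /\ forall j n, j <= n -> (P j (s n) <-> U (P j)).
Proof.
exists diagonal; split=> [|j n].
  by apply: homo_ltn ltn_trans _ => n; apply: (next_agree_spec _ _).1.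
by case: n => [|n]; apply: (next_agree_spec _ _).2.
Qed.
End Diagonal.

Lemma eventually_constant_subsequence (X : Type) (g : X -> nat) (R : X -> nat -> Prop) :
  injective g -> exists s : nat -> nat, injective s /\
    forall x, exists t : bool, exists N, forall n, N <= n -> (R x (s n) <-> t).
Proof.
move=> g_inj; have [U [U_ultra U_cofinite]] := cofinite_ultrafilter.
pose P j n := exists2 x, g x = j & R x n.
have [s [s_incr s_limit]] := ultra_limit_subsequence P U_cofinite.
exists s; split=> [|x]; first exact/incn_inj/leq_mono.
have PR n : P (g x) n <-> R x n by split=> [[y /g_inj ->]|]; last exists x.
exists `[< U (P (g x)) >], (g x) => n le_gx_n.
exact: iff_trans (iff_sym (PR _)) (iff_trans (s_limit _ _ le_gx_n) (rwP (asboolP _))).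
Qed.

Lemma countable_fun_ord (A : Type) k :
  (exists f : A -> nat, injective f) -> exists g : ('I_k -> A) -> nat, injective g.
Proof.
case=> f f_inj; exists (fun a => pickle [seq f (a i) | i <- enum 'I_k]).
move=> a1 a2 /(pcan_inj pickleK) /eq_in_map a12; apply: funext => i.
by apply: f_inj; apply: a12; rewrite mem_enum.
Qed.

Theorem claim4p4 (L : signature) (T : theory L) (k m : nat) (phi : fform L (k + m)) :
  complete_theory T -> has_IP T phi ->
  exists M : structure L,
    countable_structure M /\ is_model M T /\
    exists b : nat -> 'I_m -> M,
      (* (i) phi has IP over the sequence *)
      (forall A B : seq nat, (forall n, n \in A -> n \notin B) ->
         exists a : 'I_k -> M,
           (forall n, n \in A -> sat_xy phi a (b n)) /\
           (forall n, n \in B -> ~ sat_xy phi a (b n))) /\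
      (* (ii) every a has an eventual truth value along the sequence *)
      (forall a : 'I_k -> M, exists t : bool, exists N : nat,
         forall n, N <= n -> (sat_xy phi a (b n) <-> t = true)).
Proof.
move=> _ /IP_countable_shattered_sequence [N [b [a [N_countable N_model shatter]]]].
have [g g_inj] := countable_fun_ord k N_countable.
have [s [s_inj s_const]] := eventually_constant_subsequence (fun a n => sat_xy phi a (b n)) g_inj.
exists N; split=> //; split=> //; exists (b \o s); split=> // A B AB.
exists (a (map s A)); split=> [n nA|n nB /shatter]; first by apply/shatter; rewrite mem_map.
by rewrite mem_map // => /AB; rewrite nB.
Qed.
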